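(* $\Sigma[3]=\bigcup_{n\ge0}(\mathcal S_n[3]\cup\mathcal S'_n[3])=\mathcal S[3]\cap V_{\mathcal R}=\Sigma\cap V$, where $V_{\mathcal R}=V\cap\mathcal R^4$ and $\mathcal S[3]$ is the unit sphere of $V$.
   Context: Let $\tau=(1+\sqrt5)/2$, $\tau'=(1-\sqrt5)/2$, $\mathcal R=\mathbb{Z}[\frac12,\tau]$. Let $\Delta\subset\mathbb{R}^4$ be the set of 120 vectors consisting of: the 8 vectors obtained from $(\pm1,0,0,0)$ by permuting coordinates; the 16 vectors $\frac12(\pm1,\pm1,\pm1,\pm1)$; and the 96 vectors obtained from $\frac12(0,\pm1,\pm\tau',\pm\tau)$ (all sign choices) by even permutations of the coordinates; $\Delta'$ is its image under $\tau\leftrightarrow\tau'$ in each coordinate. For a unit vector $a$, $r_a(x)=x-2(x\cdot a)a$; $H^\infty$ is generated by $r_a$, $a\in\Delta\cup\Delta'$, and $\Sigma=H^\infty(\Delta\cup\Delta')$. Let $V=\{x\in\mathbb{R}^4:x_1=0\}$, $\Delta[3]=\Delta\cap V$, $\Delta[3]'=\Delta'\cap V$, $H^\infty[3]$ the group of orthogonal maps of $V$ generated by the reflections $r_a$, $a\in\Delta[3]\cup\Delta[3]'$, and $\Sigma[3]=H^\infty[3](\Delta[3]\cup\Delta[3]')$. Identify $V$ with $\mathbb{R}^3$ via the last three coordinates. Let $\mathbb F_4=\mathbb{Z}[\tau]/2\mathbb{Z}[\tau]$ with coordinatewise reduction $y\mapsto\bar y$. For $n\ge1$, $\mathcal S_n[3]=\{x\in2^{-n}\mathbb{Z}[\tau]^3: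 x\cdot x=1,\ \overline{2^nx}\in\{(\bar1,\bar{\tau'},\bar\tau),(\bar{\tau'},\bar\tau,\bar1),(\bar\tau,\bar1,\bar{\tau'})\}\}$, $\mathcal S'_n[3]$ the same with $\bar\tau,\bar{\tau'}$ interchanged, and $\mathcal S_0[3]=\mathcal S'_0[3]=\{(\pm1,0,0),(0,\pm1,0),(0,0,\pm1)\}$. *)

(* The ambient field is an arbitrary real closed field R
   (e.g. the real numbers); all objects involved live in Q(sqrt 5)^4. *)
From HB Require Import structures.
From mathcomp Require Import all_boot all_order all_algebra all_fingroup.
Set Implicit Arguments. Unset Strict Implicit. Unset Printing Implicit Defensive.
Import Order.TTheory GRing.Theory Num.Theory.
Local Open Scope ring_scope.

Section Defs.
Variable R : rcfType.
Local Notation vec := 'rV[R]_4.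

Definition tau : R := (1 + Num.sqrt 5) / 2.
Definition tau' : R := (1 - Num.sqrt 5) / 2.

(* coordinates x_1,...,x_4 of the paper are x 0 0, ..., x 0 3 *)
Definition dot (x y : vec) : R := \sum_(i < 4) x 0 i * y 0 i.

Definition refl (a x : vec) : vec := x - (2 * dot x a) *: a.

Definition sgn (b : bool) : R := (-1) ^+ b.
Definition unitv (i : 'I_4) : vec := \row_j (if j == i then 1 else 0).

(* Delta_gen t t' : the 120 vectors, with tau' and tau replaced by t' and t *)
Definition Delta_gen (t t' : R) (v : vec) : Prop :=
  (exists (i : 'I_4) (b : bool), v = sgn b *: unitv i) \/
  (exists s : 'I_4 -> bool, v = \row_j (sgn (s j) / 2)) \/
  (exists (p : 'S_4) (b1 b2 b3 : bool), ~~ odd_perm p /\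
     v = \row_j (nth 0 [:: 0; sgn b1; sgn b2 * t'; sgn b3 * t] (p j) / 2)).

Definition Delta := Delta_gen tau tau'.
Definition Delta' := Delta_gen tau' tau.

(* group generated by the reflections r_a, a in G (they are involutions,
   so words in the generators form the generated group) *)
Inductive gen_by (G : vec -> Prop) : (vec -> vec) -> Prop :=
| gen_id : gen_by G id
| gen_step a g : G a -> gen_by G g -> gen_by G (refl a \o g).

Definition orbit (G S0 : vec -> Prop) (x : vec) : Prop :=
  exists g y, gen_by G g /\ S0 y /\ x = g y.

Definition DeltaU (v : vec) : Prop := Delta v \/ Delta' v.
Definition Hinf := gen_by DeltaU.
Definition Sigma := orbit DeltaU DeltaU.

Definition inV (x : vec) : Prop := x 0 0 = 0.

Definition Delta3 (v : vec) : Prop := Delta v /\ inV v.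
Definition Delta3' (v : vec) : Prop := Delta' v /\ inV v.
Definition Delta3U (v : vec) : Prop := Delta3 v \/ Delta3' v.
Definition Hinf3 := gen_by Delta3U.
Definition Sigma3 := orbit Delta3U Delta3U.

Inductive inZtau : R -> Prop :=
| zt_one : inZtau 1
| zt_tau : inZtau tau
| zt_opp x : inZtau x -> inZtau (- x)
| zt_add x y : inZtau x -> inZtau y -> inZtau (x + y)
| zt_mul x y : inZtau x -> inZtau y -> inZtau (x * y).

Inductive inRR : R -> Prop :=
| rr_one : inRR 1
| rr_half : inRR (1 / 2)
| rr_tau : inRR tau
| rr_opp x : inRR x -> inRR (- x)
| rr_add x y : inRR x -> inRR y -> inRR (x + y)
| rr_mul x y : inRR x -> inRR y -> inRR (x * y).

Definition eq_mod2 (y c : R) : Prop := exists z, inZtau z /\ y - c = 2 * z.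

(* residue patterns (in F_4) for S_n[3] *)
Definition pat (t t' : R) : seq (R * R * R) :=
  [:: (1, t', t); (t', t, 1); (t, 1, t')].

(* S_n[3] (identified with a subset of V via the last three coordinates),
   with residue pattern P *)
Definition Sn_gen (P : seq (R * R * R)) (n : nat) (x : vec) : Prop :=
  if n is 0 then
    exists (i : 'I_4) (b : bool), i != 0 /\ x = sgn b *: unitv i
  else
    inV x /\ dot x x = 1 /\
    (forall j : 'I_4, j != 0 -> inZtau (2 ^+ n * x 0 j)) /\
    exists c1 c2 c3, (c1, c2, c3) \in P /\
      eq_mod2 (2 ^+ n * x 0 (inord 1)) c1 /\
      eq_mod2 (2 ^+ n * x 0 (inord 2)) c2 /\
      eq_mod2 (2 ^+ n * x 0 (inord 3)) c3.

Definition S3 := Sn_gen (pat tau tau').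
Definition S3' := Sn_gen (pat tau' tau).

Definition sphereV_R (x : vec) : Prop :=
  inV x /\ dot x x = 1 /\ forall i : 'I_4, inRR (x 0 i).

End Defs.

From Pilot Require Import Defs.
From HB Require Import structures.
From mathcomp Require Import all_boot all_order all_algebra all_fingroup.
From mathcomp Require Import zify ring lra.
Set Implicit Arguments. Unset Strict Implicit. Unset Printing Implicit Defensive.
Import Order.TTheory GRing.Theory Num.Theory.
Local Open Scope ring_scope.

(* Write a point x of S[3] /\ V_R as 2^-n y with y in Z[tau]^3 (last three
   coordinates).  If y = 0 mod 2 the exponent n can be lowered.  Otherwise
   |y|^2 = 4^n = 0 mod 4, and a finite computation in Z[tau]/4 shows both that
   y mod 2 is one of the six residue patterns, so x lies in S_n[3] or S'_n[3],
   and that for some root a of Delta[3] \/ Delta[3]' the point r_a(x) is again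
   on the sphere with exponent n - 1.  Induction on n ends at n = 0, where the
   only unit vectors are the +-e_i.  Conversely the reflections in the unit
   roots of Delta \/ Delta' preserve the unit sphere, V and R^4. *)

(* (a, b) stands for a + b tau. *)
Definition zpair := (int * int)%type.

Definition zadd (p q : zpair) : zpair := (p.1 + q.1, p.2 + q.2).
Definition zsub (p q : zpair) : zpair := (p.1 - q.1, p.2 - q.2).
(* uses tau ^+ 2 = tau + 1 *)
Definition zmul (p q : zpair) : zpair :=
  (p.1 * q.1 + p.2 * q.2, p.1 * q.2 + p.2 * q.1 + p.2 * q.2).

Definition zdot3 (y1 y2 y3 b1 b2 b3 : zpair) : zpair :=
  zadd (zadd (zmul y1 b1) (zmul y2 b2)) (zmul y3 b3).
Definition znorm3 (y1 y2 y3 : zpair) : zpair := zdot3 y1 y2 y3 y1 y2 y3.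

Definition z0 : zpair := (0, 0).
Definition z1 : zpair := (1, 0).
Definition ztau : zpair := (0, 1).
Definition ztau' : zpair := (1, -1).
Definition zsign (b : bool) (p : zpair) : zpair := if b then (- p.1, - p.2) else p.

Definition zeven (p : zpair) : bool := (2 %| p.1)%Z && (2 %| p.2)%Z.
Definition zdiv4 (p : zpair) : bool := (4 %| p.1)%Z && (4 %| p.2)%Z.
Definition zhalf (p : zpair) : zpair := ((p.1 %/ 2)%Z, (p.2 %/ 2)%Z).

Lemma zhalfK p : zeven p -> zadd (zhalf p) (zhalf p) = p.
Proof.
case: p => a b /andP[/= ha hb]; rewrite /zadd /zhalf /=.
by congr (_, _); [rewrite -[RHS](divzK ha) | rewrite -[RHS](divzK hb)]; ring.
Qed.

Definition zcong (m : int) (p q : zpair) : Prop :=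
  (m %| p.1 - q.1)%Z /\ (m %| p.2 - q.2)%Z.

Section Congruence.
Variable m : int.

Lemma dvdz_subD a a' b b' : (m %| a - a')%Z -> (m %| b - b')%Z ->
  (m %| (a + b) - (a' + b'))%Z.
Proof. by move=> ha hb; rewrite opprD addrACA rpredD. Qed.

Lemma dvdz_subB a a' b b' : (m %| a - a')%Z -> (m %| b - b')%Z ->
  (m %| (a - b) - (a' - b'))%Z.
Proof.
move=> ha hb; have -> : a - b - (a' - b') = (a - a') - (b - b') by ring.
exact: rpredB.
Qed.

Lemma dvdz_subM a a' b b' : (m %| a - a')%Z -> (m %| b - b')%Z ->
  (m %| (a * b) - (a' * b'))%Z.
Proof.
move=> ha hb; have -> : a * b - a' * b' = a * (b - b') + (a - a') * b' by ring.
by apply: rpredD; [apply: dvdz_mull | apply: dvdz_mulr].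
Qed.

Lemma dvdz_sub_eq a a' : (m %| a - a')%Z -> (m %| a)%Z = (m %| a')%Z.
Proof. by move=> h; rewrite -[in LHS](subrK a' a) (rpredDl _ h). Qed.

Lemma zcong_refl p : zcong m p p.
Proof. by split; rewrite subrr dvdz0. Qed.

Lemma zcongD p p' q q' : zcong m p p' -> zcong m q q' -> zcong m (zadd p q) (zadd p' q').
Proof. by move=> [? ?] [? ?]; split; apply: dvdz_subD. Qed.

Lemma zcongB p p' q q' : zcong m p p' -> zcong m q q' -> zcong m (zsub p q) (zsub p' q').
Proof. by move=> [? ?] [? ?]; split; apply: dvdz_subB. Qed.

Lemma zcongM p p' q q' : zcong m p p' -> zcong m q q' -> zcong m (zmul p q) (zmul p' q').
Proof. by move=> [? ?] [? ?]; split; rewrite /=; repeat apply: dvdz_subD; apply: dvdz_subM. Qed.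

End Congruence.

Lemma zcong4_2 p q : zcong 4 p q -> zcong 2 p q.
Proof. by case=> h1 h2; split; [apply: dvdz_trans h1 | apply: dvdz_trans h2]. Qed.

Lemma zeven_cong p q : zcong 2 p q -> zeven p = zeven q.
Proof. by case=> h1 h2; rewrite /zeven (dvdz_sub_eq h1) (dvdz_sub_eq h2). Qed.

Lemma zdiv4_cong p q : zcong 4 p q -> zdiv4 p = zdiv4 q.
Proof. by case=> h1 h2; rewrite /zdiv4 (dvdz_sub_eq h1) (dvdz_sub_eq h2). Qed.

Definition zreps : seq zpair :=
  [seq (a, b) | a <- [:: 0; 1; 2; 3], b <- [:: 0; 1; 2; 3]].

Lemma zreps_cong4 p : exists2 q, q \in zreps & zcong 4 p q.
Proof.
have rep (a : int) : exists2 r, r \in [:: 0; 1; 2; 3] & (4 %| a - r)%Z.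
  exists (a %% 4)%Z; last by rewrite {1}(divz_eq a 4) addrK dvdz_mull.
  have := modz_ge0 a (isT : (4 : int) != 0); have := ltz_mod a (isT : (4 : int) != 0).
  by case: (a %% 4)%Z => // -[|[|[|[|n]]]].
case: p => a b; case: (rep a) => a' ? ?; case: (rep b) => b' ? ?.
by exists (a', b'); [apply: allpairs_f | split].
Qed.

Definition cyc (k j : nat) : nat :=
  match k, j with
  | 1, 1 => 2 | 1, 2 => 3 | 1, 3 => 1
  | 2, 1 => 3 | 2, 2 => 1 | 2, 3 => 2
  | _, _ => j end.

(* [d = false] gives the roots of Delta[3], [d = true] those of Delta[3]'. *)
Definition zroot_entries (d s1 s2 s3 : bool) : seq zpair :=
  [:: z0; zsign s1 z1; zsign s2 (if d then ztau else ztau');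
      zsign s3 (if d then ztau' else ztau)].

(* twice the [j]-th coordinate of a root *)
Definition zroot (d : bool) (k : nat) (s1 s2 s3 : bool) (j : nat) : zpair :=
  nth z0 (zroot_entries d s1 s2 s3) (cyc k j).

Definition zpattern (d : bool) (k j : nat) : zpair := zroot d k false false false j.

Definition zadmissible (y1 y2 y3 : zpair) : bool :=
  zdiv4 (znorm3 y1 y2 y3) && ~~ [&& zeven y1, zeven y2 & zeven y3].

Definition zpatterned (y1 y2 y3 : zpair) : bool :=
  has (fun d => has (fun k =>
    [&& zeven (zsub y1 (zpattern d k 1)), zeven (zsub y2 (zpattern d k 2))
      & zeven (zsub y3 (zpattern d k 3))]) (iota 0 3)) [:: false; true].

(* The reflection in the root [b / 2] maps [y] to [y - u b] with [2 u = y . b]. *)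
Definition zreflectable (y1 y2 y3 : zpair) : bool :=
  has (fun d => has (fun k => has (fun s1 => has (fun s2 => has (fun s3 =>
    let b := zroot d k s1 s2 s3 in
    let w := zdot3 y1 y2 y3 (b 1) (b 2) (b 3) in
    [&& zeven w, zeven (zsub y1 (zmul (zhalf w) (b 1))),
        zeven (zsub y2 (zmul (zhalf w) (b 2)))
      & zeven (zsub y3 (zmul (zhalf w) (b 3)))])
  [:: false; true]) [:: false; true]) [:: false; true]) (iota 0 3)) [:: false; true].

(* Both properties only depend on residues mod 4 (see below), so checking
   the 16^3 triples of representatives suffices. *)
Lemma zreps_residues : all (fun y1 => all (fun y2 => all (fun y3 =>
  zadmissible y1 y2 y3 ==> zpatterned y1 y2 y3 && zreflectable y1 y2 y3)
  zreps) zreps) zreps.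
Proof. by vm_compute. Qed.

Lemma zcong_double u v : zcong 4 (zadd u u) (zadd v v) -> zcong 2 u v.
Proof.
have e (a b : int) : a + a - (b + b) = 2 * (a - b) by ring.
by case=> /= h1 h2; split; rewrite -(@dvdz_mul2l 2) // -e.
Qed.

Lemma zadmissible_cong y1 y2 y3 y1' y2' y3' :
  zcong 4 y1 y1' -> zcong 4 y2 y2' -> zcong 4 y3 y3' ->
  zadmissible y1 y2 y3 = zadmissible y1' y2' y3'.
Proof.
move=> c1 c2 c3; rewrite /zadmissible.
rewrite (zdiv4_cong (zcongD (zcongD (zcongM c1 c1) (zcongM c2 c2)) (zcongM c3 c3))).
by rewrite (zeven_cong (zcong4_2 c1)) (zeven_cong (zcong4_2 c2)) (zeven_cong (zcong4_2 c3)).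
Qed.

Lemma zeven_sub_cong y y' c : zcong 2 y y' -> zeven (zsub y c) = zeven (zsub y' c).
Proof. by move=> h; apply/zeven_cong/zcongB => //; apply: zcong_refl. Qed.

Lemma zpatterned_cong y1 y2 y3 y1' y2' y3' :
  zcong 2 y1 y1' -> zcong 2 y2 y2' -> zcong 2 y3 y3' ->
  zpatterned y1 y2 y3 = zpatterned y1' y2' y3'.
Proof.
move=> c1 c2 c3; apply: eq_has => d; apply: eq_has => k.
by rewrite !(zeven_sub_cong _ c1) !(zeven_sub_cong _ c2) !(zeven_sub_cong _ c3).
Qed.

Lemma zadmissible_residues y1 y2 y3 : zadmissible y1 y2 y3 ->
  exists y1' y2' y3', [/\ zcong 4 y1 y1', zcong 4 y2 y2', zcong 4 y3 y3'
    & zpatterned y1' y2' y3' && zreflectable y1' y2' y3'].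
Proof.
case: (zreps_cong4 y1) => y1' r1 c1; case: (zreps_cong4 y2) => y2' r2 c2.
case: (zreps_cong4 y3) => y3' r3 c3; rewrite (zadmissible_cong c1 c2 c3) => adm.
exists y1', y2', y3'; split => //.
by move/allP: zreps_residues => /(_ _ r1)/allP/(_ _ r2)/allP/(_ _ r3)/implyP; apply.
Qed.

Lemma zadmissible_patterned y1 y2 y3 :
  zadmissible y1 y2 y3 -> zpatterned y1 y2 y3.
Proof.
case/zadmissible_residues => y1' [y2' [y3' [c1 c2 c3 /andP[+ _]]]].
by rewrite (zpatterned_cong (zcong4_2 c1) (zcong4_2 c2) (zcong4_2 c3)).
Qed.

Lemma zadmissible_reflectable y1 y2 y3 : zadmissible y1 y2 y3 ->
  exists d k s1 s2 s3, (k < 3)%N /\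
    let b := zroot d k s1 s2 s3 in let w := zdot3 y1 y2 y3 (b 1) (b 2) (b 3) in
    zeven w /\ forall u, zadd u u = w ->
      [&& zeven (zsub y1 (zmul u (b 1))), zeven (zsub y2 (zmul u (b 2)))
        & zeven (zsub y3 (zmul u (b 3)))].
Proof.
case/zadmissible_residues => y1' [y2' [y3' [c1 c2 c3 /andP[_]]]].
case/hasP => d _ /hasP[k]; rewrite mem_iota => /andP[_ lt_k3].
case/hasP => s1 _ /hasP[s2 _ /hasP[s3 _]] red'.
exists d, k, s1, s2, s3; split => //=; move: red' => /=.
move: (zroot d k s1 s2 s3) => b /and4P[ev_w' e1 e2 e3].
set w' := zdot3 y1' y2' y3' _ _ _ in ev_w' e1 e2 e3 *.
have cw : zcong 4 (zdot3 y1 y2 y3 (b 1) (b 2) (b 3)) w'.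
  by apply: zcongD; [apply: zcongD|]; apply: zcongM => //; apply: zcong_refl.
split; first by rewrite (zeven_cong (zcong4_2 cw)).
move=> u def_w; have cu : zcong 2 u (zhalf w').
  by apply: zcong_double; rewrite zhalfK // def_w.
have cub j : zcong 2 (zmul u (b j)) (zmul (zhalf w') (b j)).
  by apply: zcongM => //; apply: zcong_refl.
rewrite (zeven_cong (zcongB (zcong4_2 c1) (cub 1%N))).
rewrite (zeven_cong (zcongB (zcong4_2 c2) (cub 2%N))).
by rewrite (zeven_cong (zcongB (zcong4_2 c3) (cub 3%N))) e1 e2 e3.
Qed.

Lemma eq_sqr_5sqr (c d : int) : c ^+ 2 = 5 * d ^+ 2 -> d = 0.
Proof.
move=> h; apply/eqP; apply: contraTT isT => d_neq0.
have /(congr1 (logn 5)) : (`|c| ^ 2 = 5 * `|d| ^ 2)%N by rewrite -abszX h abszM abszX.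
rewrite lognM ?expn_gt0 ?absz_gt0 ?d_neq0 // !lognX => /(congr1 odd).
by rewrite oddD !oddM.
Qed.

Definition zscale (c : int) (p : zpair) : zpair := (c * p.1, c * p.2).

Section Embedding.
Variable R : rcfType.
Local Notation tau := (tau R).
Local Notation tau' := (tau' R).

Lemma sqrt5_sqr : Num.sqrt (5 : R) ^+ 2 = 5.
Proof. by rewrite sqr_sqrtr // ler0n. Qed.

Lemma tau_sqr : tau ^+ 2 = tau + 1.
Proof.
apply/eqP; rewrite -subr_eq0 /Defs.tau.
have -> : ((1 + Num.sqrt (5 : R)) / 2) ^+ 2 - ((1 + Num.sqrt 5) / 2 + 1)
  = (Num.sqrt (5 : R) ^+ 2 - 5) / 4 by field.
by rewrite sqrt5_sqr subrr mul0r.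
Qed.

Lemma tau'E : tau' = 1 - tau.
Proof. by rewrite /Defs.tau' /Defs.tau; field. Qed.

Lemma tau_sqrD : tau ^+ 2 + tau' ^+ 2 = 3.
Proof. by rewrite tau'E sqrrB tau_sqr; ring. Qed.

Definition zval (p : zpair) : R := p.1%:~R + p.2%:~R * tau.

Lemma zvalD p q : zval (zadd p q) = zval p + zval q.
Proof. by rewrite /zval /= !intrD; ring. Qed.

Lemma zvalB p q : zval (zsub p q) = zval p - zval q.
Proof. by rewrite /zval /= !intrB; ring. Qed.

Lemma zvalM p q : zval (zmul p q) = zval p * zval q.
Proof.
apply/eqP; rewrite -subr_eq0 /zval /= !intrD !intrM; apply/eqP.
transitivity (p.2%:~R * q.2%:~R * (tau + 1 - tau ^+ 2) : R); first ring.
by rewrite tau_sqr subrr mulr0.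
Qed.

Lemma zvalZ c p : zval (zscale c p) = c%:~R * zval p.
Proof. by rewrite /zval /= !intrM; ring. Qed.

Lemma zval_double p : zval (zadd p p) = 2 * zval p.
Proof. by rewrite zvalD; ring. Qed.

Lemma zval0 : zval z0 = 0. Proof. by rewrite /zval /= mul0r addr0. Qed.
Lemma zval1 : zval z1 = 1. Proof. by rewrite /zval /= mul0r addr0. Qed.
Lemma zval_tau : zval ztau = tau. Proof. by rewrite /zval /= mul1r add0r. Qed.
Lemma zval_tau' : zval ztau' = tau'. Proof. by rewrite /zval /= tau'E mulN1r. Qed.

Lemma zval_sign b p : zval (zsign b p) = sgn R b * zval p.
Proof. by case: b; rewrite /zval /sgn /= ?expr1 ?expr0 ?intrN; ring. Qed.

Lemma zval_eq0 p : zval p = 0 -> p = z0.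
Proof.
case: p => a b; rewrite /zval /= => h.
have e : (2 * a + b)%:~R = - (b%:~R * Num.sqrt 5) :> R.
  have : 2 * (a%:~R + b%:~R * tau) = 0 :> R by rewrite h mulr0.
  by rewrite /Defs.tau intrD intrM => e; apply/eqP; rewrite -subr_eq0 -e; apply/eqP; field.
have b0 : b = 0.
  apply: (@eq_sqr_5sqr (2 * a + b)); apply/eqP; rewrite -(eqr_int R).
  by rewrite !rmorphXn /= e sqrrN exprMn sqrt5_sqr rmorphM rmorphXn /= mulrC.
by move: h; rewrite b0 mul0r addr0 => /eqP; rewrite intr_eq0 => /eqP ->.
Qed.

Lemma zval_inj : injective zval.
Proof.
move=> [a b] [c d] e; have /zval_eq0[] : zval (zsub (a, b) (c, d)) = 0.
  by rewrite zvalB e subrr.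
by move=> /subr0_eq -> /subr0_eq ->.
Qed.

Lemma inZtau_zval z : inZtau z <-> exists p, z = zval p.
Proof.
split.
  elim=> [|| x _ [p ->] | x y _ [p ->] _ [q ->] | x y _ [p ->] _ [q ->]].
  - by exists z1; rewrite zval1.
  - by exists ztau; rewrite zval_tau.
  - by exists (zsub z0 p); rewrite zvalB zval0 sub0r.
  - by exists (zadd p q); rewrite zvalD.
  - by exists (zmul p q); rewrite zvalM.
have Zint (c : int) : inZtau (c%:~R : R).
  have Znat (n : nat) : inZtau (n%:R : R).
    elim: n => [|n IH]; last by rewrite -addn1 natrD; apply: zt_add => //; apply: zt_one.
    by rewrite mulr0n -(subrr 1); apply: zt_add; [|apply: zt_opp]; apply: zt_one.
  by case: c => n; rewrite ?NegzE ?intrN; [|apply: zt_opp]; apply: Znat.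
by case=> p ->; apply: zt_add; [|apply: zt_mul; [|apply: zt_tau]]; apply: Zint.
Qed.

Lemma zeven_eq_mod2 y c : zeven (zsub y c) -> eq_mod2 (zval y) (zval c).
Proof.
move=> ev; exists (zval (zhalf (zsub y c))); split.
  by apply/inZtau_zval; exists (zhalf (zsub y c)).
by rewrite -zval_double zhalfK // zvalB.
Qed.

Lemma inRR_dyadic z : inRR z -> exists k p, 2 ^+ k * z = zval p.
Proof.
elim=> [|||x _ [k [p e]]|x y _ [k [p ex]] _ [l [q ey]]|x y _ [k [p ex]] _ [l [q ey]]].
- by exists 0%N, z1; rewrite zval1 mulr1.
- by exists 1%N, z1; rewrite zval1 expr1 mul1r divff // pnatr_eq0.
- by exists 0%N, ztau; rewrite zval_tau mul1r.
- by exists k, (zsub z0 p); rewrite zvalB zval0 sub0r -e mulrN.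
- exists (k + l)%N, (zadd (zscale (2 ^+ l) p) (zscale (2 ^+ k) q)).
  by rewrite zvalD !zvalZ -ex -ey !rmorphXn exprD; ring.
- by exists (k + l)%N, (zmul p q); rewrite zvalM -ex -ey exprD; ring.
Qed.

End Embedding.

Definition i1 : 'I_4 := inord 1.
Definition i2 : 'I_4 := inord 2.
Definition i3 : 'I_4 := inord 3.

Lemma val_i1 : val i1 = 1%N. Proof. exact: inordK. Qed.
Lemma val_i2 : val i2 = 2%N. Proof. exact: inordK. Qed.
Lemma val_i3 : val i3 = 3%N. Proof. exact: inordK. Qed.
Definition val_iE := (val_i1, val_i2, val_i3).

Lemma i1_neq0 : i1 != 0. Proof. by rewrite -val_eqE val_iE. Qed.
Lemma i2_neq0 : i2 != 0. Proof. by rewrite -val_eqE val_iE. Qed.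
Lemma i3_neq0 : i3 != 0. Proof. by rewrite -val_eqE val_iE. Qed.
Lemma i1_neq2 : i1 != i2. Proof. by rewrite -val_eqE !val_iE. Qed.
Lemma i1_neq3 : i1 != i3. Proof. by rewrite -val_eqE !val_iE. Qed.

Lemma ord4P (j : 'I_4) : [\/ j = 0, j = i1, j = i2 | j = i3].
Proof.
case: j => -[|[|[|[|//]]]] lt_j4; [apply: Or41 | apply: Or42 | apply: Or43 | apply: Or44];
  by apply/val_inj; rewrite /= ?val_iE.
Qed.

Lemma big_ord4 (V : nmodType) (F : 'I_4 -> V) :
  \sum_(j < 4) F j = F 0 + F i1 + F i2 + F i3.
Proof.
rewrite !big_ord_recl big_ord0 addr0 !addrA.
by congr (F _ + F _ + F _ + F _); apply/val_inj; rewrite /= ?val_iE.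
Qed.

Section Reflections.
Variable R : rcfType.
Implicit Types (a x y : 'rV[R]_4) (c : R).

Lemma dotE x y :
  dot x y = x 0 0 * y 0 0 + x 0 i1 * y 0 i1 + x 0 i2 * y 0 i2 + x 0 i3 * y 0 i3.
Proof. exact: big_ord4. Qed.

Lemma dotC x y : dot x y = dot y x.
Proof. by apply: eq_bigr => i _; rewrite mulrC. Qed.

Lemma dotBl x y a : dot (x - y) a = dot x a - dot y a.
Proof. by rewrite /dot -sumrB; apply: eq_bigr => i _; rewrite !mxE mulrBl. Qed.

Lemma dotZl c x a : dot (c *: x) a = c * dot x a.
Proof. by rewrite /dot mulr_sumr; apply: eq_bigr => i _; rewrite !mxE mulrA. Qed.

Lemma dotBr x y a : dot a (x - y) = dot a x - dot a y.
Proof. by rewrite dotC dotBl !(dotC a). Qed.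

Lemma dotZr c x a : dot a (c *: x) = c * dot a x.
Proof. by rewrite dotC dotZl dotC. Qed.

Lemma reflE a x j : refl a x 0 j = x 0 j - 2 * dot x a * a 0 j.
Proof. by rewrite !mxE. Qed.

Section UnitRoot.
Variables (a : 'rV[R]_4) (a_unit : dot a a = 1).

Lemma dot_refl_root x : dot (refl a x) a = - dot x a.
Proof. by rewrite /refl dotBl dotZl a_unit; ring. Qed.

Lemma dot_refl x : dot (refl a x) (refl a x) = dot x x.
Proof. by rewrite {1}/refl dotBl dotZl (dotC a) dot_refl_root /refl dotBr dotZr; ring. Qed.

Lemma reflK : involutive (refl a).
Proof. by move=> x; rewrite {1}/refl dot_refl_root /refl mulrN scaleNr opprK subrK. Qed.

End UnitRoot.

Lemma refl_inV a x : inV a -> inV x -> inV (refl a x).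
Proof. by rewrite /inV reflE => -> ->; rewrite mulr0 subr0. Qed.

End Reflections.

Section Roots.
Variable R : rcfType.
Local Notation sgn := (sgn R).
Implicit Types (v : 'rV[R]_4) (x y : R).

Lemma sgn_sqr b : sgn b ^+ 2 = 1.
Proof. by case: b; rewrite /Defs.sgn ?expr1 ?expr0 ?sqrrN expr1n. Qed.

Lemma Delta_gen_unit (t t' : R) v : t ^+ 2 + t' ^+ 2 = 3 -> Delta_gen t t' v -> dot v v = 1.
Proof.
move=> tt' [[i [b ->]] | [[s ->] | [p [b1 [b2 [b3 [_ ->]]]]]]].
- rewrite /dot (bigD1 i) //= big1 => [|j /negbTE ji]; last by rewrite !mxE ji mulr0 mul0r.
  by rewrite !mxE eqxx mulr1 -expr2 sgn_sqr addr0.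
- by rewrite dotE !mxE -!expr2 !expr_div_n !sgn_sqr; field.
- set g := fun k : 'I_4 => nth 0 [:: 0; sgn b1; sgn b2 * t'; sgn b3 * t] k / 2.
  rewrite /dot (eq_bigr (fun j => g (p j) ^+ 2)) => [|j _]; last by rewrite !mxE expr2.
  rewrite -(reindex_inj (@perm_inj _ p) (P := xpredT) (F := fun k => g k ^+ 2)).
  rewrite big_ord4 /g /= !val_iE /=.
  by rewrite !expr_div_n !exprMn !sgn_sqr !mul1r; lra.
Qed.

Lemma inRR0 : inRR (0 : R).
Proof. by rewrite -(subrr 1); apply: rr_add; [|apply: rr_opp]; apply: rr_one. Qed.

Lemma inRRB x y : inRR x -> inRR y -> inRR (x - y).
Proof. by move=> hx hy; apply: rr_add => //; apply: rr_opp. Qed.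

Lemma inRR_nat n : inRR (n%:R : R).
Proof.
by elim: n => [|n IH]; rewrite ?mulr0n ?mulrS; [apply: inRR0 | apply: rr_add => //; apply: rr_one].
Qed.

Lemma inRR_sgn b : inRR (sgn b).
Proof. by case: b; rewrite /Defs.sgn ?expr1 ?expr0; [apply: rr_opp|]; apply: rr_one. Qed.

Lemma inRR_half x : inRR x -> inRR (x / 2).
Proof. by move=> hx; rewrite -[x / 2]mul1r mulrCA; apply: rr_mul => //; apply: rr_half. Qed.

Lemma inRR_tau' : inRR (tau' R).
Proof. by rewrite tau'E; apply: inRRB; [apply: rr_one | apply: rr_tau]. Qed.

Lemma Delta_gen_inRR (t t' : R) v : inRR t -> inRR t' -> Delta_gen t t' v ->
  forall i, inRR (v 0 i).
Proof.
move=> ht ht' [[i [b ->]] | [[s ->] | [p [b1 [b2 [b3 [_ ->]]]]]]] j; rewrite !mxE.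
- by apply: rr_mul; [apply: inRR_sgn | case: (j == i); [apply: rr_one | apply: inRR0]].
- exact/inRR_half/inRR_sgn.
- apply: inRR_half; case: (p j) => -[|[|[|[|//]]]] _ /=; rewrite ?nth_nil;
    by [apply: inRR0 | apply: inRR_sgn | apply: rr_mul => //; apply: inRR_sgn].
Qed.

Lemma refl_inRR (a x : 'rV[R]_4) : (forall i, inRR (a 0 i)) -> (forall i, inRR (x 0 i)) ->
  forall i, inRR (refl a x 0 i).
Proof.
move=> ha hx i; rewrite reflE dotE; apply: inRRB => //.
by do !apply: rr_mul => //; first (by apply: inRR_nat); do !apply: rr_add; apply: rr_mul.
Qed.

Lemma DeltaU_unit_inRR v : DeltaU v -> dot v v = 1 /\ forall i, inRR (v 0 i).
Proof.
case=> hv; split.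
- exact: Delta_gen_unit (tau_sqrD R) hv.
- exact: Delta_gen_inRR (rr_tau R) inRR_tau' hv.
- by apply: Delta_gen_unit hv; rewrite addrC tau_sqrD.
- exact: Delta_gen_inRR inRR_tau' (rr_tau R) hv.
Qed.

Lemma Sigma_unit_inRR (x : 'rV[R]_4) : Sigma x -> dot x x = 1 /\ forall i, inRR (x 0 i).
Proof.
case=> g [y [gen_g [/DeltaU_unit_inRR hy ->]]]; elim: gen_g => //= a g' ha _ [ih1 ih2].
have [a_unit a_RR] := DeltaU_unit_inRR ha.
by split; [rewrite dot_refl | apply: refl_inRR].
Qed.

Lemma Delta3U_DeltaU v : Delta3U v -> DeltaU v /\ inV v.
Proof. by case=> -[]; split => //; [left | right]. Qed.

Lemma Sigma3_Sigma_inV (x : 'rV[R]_4) : Sigma3 x -> Sigma x /\ inV x.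
Proof.
case=> g [y [gen_g [/Delta3U_DeltaU[y_U y_V] ->]]]; split.
  exists g, y; split => //; elim: gen_g => [|a g' /Delta3U_DeltaU[a_U _] _ IH]; first exact: gen_id.
  exact: gen_step.
elim: gen_g => //= a g' /Delta3U_DeltaU[_ a_V] _ IH; exact: refl_inV.
Qed.

End Roots.

Definition cyc_perm (k : nat) : 'S_4 :=
  if k == 1%N then (tperm i1 i2 * tperm i1 i3)%g
  else if k == 2%N then (tperm i1 i3 * tperm i1 i2)%g else 1%g.

Lemma cyc_perm_even k : ~~ odd_perm (cyc_perm k).
Proof.
rewrite /cyc_perm; do 2?case: ifP => _; rewrite ?odd_perm1 //.
all: by rewrite odd_permM !odd_tperm i1_neq2 i1_neq3.
Qed.

Lemma cyc_permE k j : (k < 3)%N -> val (cyc_perm k j) = cyc k (val j).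
Proof.
case: k => [|[|[|//]]] _; rewrite /cyc_perm /= ?perm1 // permM /tperm !permE /=;
  by case: (ord4P j) => ->; rewrite -!val_eqE /= !val_iE.
Qed.

Section RootVectors.
Variable R : rcfType.
Local Notation tau := (tau R).
Local Notation tau' := (tau' R).

Definition root_entries (d s1 s2 s3 : bool) : seq R :=
  [:: 0; sgn R s1; sgn R s2 * (if d then tau else tau');
      sgn R s3 * (if d then tau' else tau)].

Definition rootv (d : bool) (k : nat) (s1 s2 s3 : bool) : 'rV[R]_4 :=
  \row_j (nth 0 (root_entries d s1 s2 s3) (cyc_perm k j) / 2).

Lemma nth_root_entries d s1 s2 s3 m :
  nth 0 (root_entries d s1 s2 s3) m = zval R (nth z0 (zroot_entries d s1 s2 s3) m).
Proof.
case: m => [|[|[|[|m]]]] /=; rewrite ?nth_nil ?zval0 // zval_sign ?zval1 ?mulr1 //.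
all: by case: d; rewrite ?zval_tau ?zval_tau'.
Qed.

Lemma rootv_zroot d k s1 s2 s3 (j : 'I_4) : (k < 3)%N ->
  2 * rootv d k s1 s2 s3 0 j = zval R (zroot d k s1 s2 s3 j).
Proof.
by move=> lt_k3; rewrite mxE cyc_permE // nth_root_entries mulrC divfK ?pnatr_eq0.
Qed.

Lemma rootv_Delta3U d k s1 s2 s3 : (k < 3)%N -> Delta3U (rootv d k s1 s2 s3).
Proof.
move=> lt_k3; have root_Delta : Delta_gen (if d then tau' else tau)
    (if d then tau else tau') (rootv d k s1 s2 s3).
  by right; right; exists (cyc_perm k), s1, s2, s3; split; [apply: cyc_perm_even | case: d].
have root_V : inV (rootv d k s1 s2 s3).
  by rewrite /inV mxE cyc_permE //; case: (k) => [|[|[|?]]]; rewrite /= mul0r.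
by case: d root_Delta root_V => ??; [right | left].
Qed.

End RootVectors.

Lemma znorm3_eq1 y1 y2 y3 : znorm3 y1 y2 y3 = z1 ->
  exists b, [\/ [/\ y1 = zsign b z1, y2 = z0 & y3 = z0],
                [/\ y1 = z0, y2 = zsign b z1 & y3 = z0]
              | [/\ y1 = z0, y2 = z0 & y3 = zsign b z1]].
Proof.
case: y1 y2 y3 => [a1 b1] [a2 b2] [a3 b3] [/= h1 h2].
have [b1_0 b2_0 b3_0] : [/\ b1 = 0, b2 = 0 & b3 = 0] by split; nia.
subst b1 b2 b3; have h : a1 * a1 + a2 * a2 + a3 * a3 = 1 by lia.
move: (h) {h1 h2}; have [->|[->|->]] : a1 = 0 \/ a1 = 1 \/ a1 = -1 by nia.
all: have [->|[->|->]] : a2 = 0 \/ a2 = 1 \/ a2 = -1 by nia.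
all: have [->|[->|->]] : a3 = 0 \/ a3 = 1 \/ a3 = -1 by nia.
all: move=> h'; try by lia.
all: by (exists false + exists true); (apply: Or31 + apply: Or32 + apply: Or33).
Qed.

Section Levels.
Variable R : rcfType.
Local Notation vec := 'rV[R]_4.
Local Notation zval := (zval R).
Implicit Types x a : vec.

Definition unitV (x : vec) : Prop := inV x /\ dot x x = 1.

Definition level (n : nat) (x : vec) : Prop :=
  forall j : 'I_4, j != 0 -> exists p, 2 ^+ n * x 0 j = zval p.

Lemma level_coords n x : level n x -> exists y1 y2 y3,
  [/\ 2 ^+ n * x 0 i1 = zval y1, 2 ^+ n * x 0 i2 = zval y2 & 2 ^+ n * x 0 i3 = zval y3].
Proof.
move=> lx; case: (lx _ i1_neq0) => y1 ?; case: (lx _ i2_neq0) => y2 ?.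
by case: (lx _ i3_neq0) => y3 ?; exists y1, y2, y3.
Qed.

Lemma level_of_coords n x y1 y2 y3 : 2 ^+ n * x 0 i1 = zval y1 ->
  2 ^+ n * x 0 i2 = zval y2 -> 2 ^+ n * x 0 i3 = zval y3 -> level n x.
Proof.
by move=> e1 e2 e3 j; case: (ord4P j) => -> // _; [exists y1 | exists y2 | exists y3].
Qed.

Lemma level_inZtau n x j : level n x -> j != 0 -> inZtau (2 ^+ n * x 0 j).
Proof. by move=> lx /lx[p ->]; apply/inZtau_zval; exists p. Qed.

Lemma znorm3_level n x y1 y2 y3 : unitV x -> 2 ^+ n * x 0 i1 = zval y1 ->
  2 ^+ n * x 0 i2 = zval y2 -> 2 ^+ n * x 0 i3 = zval y3 ->
  znorm3 y1 y2 y3 = ((4 : int) ^+ n, 0).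
Proof.
case; rewrite /inV dotE => -> x_unit e1 e2 e3; apply: (@zval_inj R).
rewrite /znorm3 /zdot3 !zvalD !zvalM -e1 -e2 -e3 /zval /= mul0r addr0 rmorphXn /=.
have -> : (4%:~R : R) = 2 ^+ 2 by rewrite expr2 -natrM.
by rewrite -exprM mulnC exprM -[RHS]mulr1 -x_unit; ring.
Qed.

Lemma zval_half n (X : R) y : 2 ^+ n.+1 * X = zval y -> zeven y ->
  2 ^+ n * X = zval (zhalf y).
Proof.
move=> e ev; apply: (@mulfI _ 2); first by rewrite pnatr_eq0.
by rewrite -zval_double zhalfK // -e exprS mulrA.
Qed.

Lemma level_admissible n x y1 y2 y3 : unitV x -> 2 ^+ n.+1 * x 0 i1 = zval y1 ->
  2 ^+ n.+1 * x 0 i2 = zval y2 -> 2 ^+ n.+1 * x 0 i3 = zval y3 ->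
  ~~ [&& zeven y1, zeven y2 & zeven y3] -> zadmissible y1 y2 y3.
Proof.
move=> ux e1 e2 e3 nev; rewrite /zadmissible nev andbT (znorm3_level ux e1 e2 e3).
by rewrite /zdiv4 dvdz0 andbT exprS dvdz_mulr.
Qed.

Lemma unit_level0 x : unitV x -> level 0 x ->
  exists i b, i != 0 /\ x = sgn R b *: unitv R i.
Proof.
move=> ux /level_coords[y1 [y2 [y3 [e1 e2 e3]]]].
have /znorm3_eq1[b] := znorm3_level ux e1 e2 e3; rewrite expr0 !mul1r in e1 e2 e3.
case: ux => /= x_V _; have zsE : zval (zsign b z1) = sgn R b by rewrite zval_sign zval1 mulr1.
case=> -[d1 d2 d3]; rewrite {}d1 {}d2 {}d3 ?zsE ?zval0 in e1 e2 e3;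
  [exists i1 | exists i2 | exists i3]; exists b;
  (split; first by rewrite ?i1_neq0 ?i2_neq0 ?i3_neq0).
all: by apply/rowP => j; rewrite !mxE; case: (ord4P j) => ->;
     rewrite -val_eqE /= ?val_iE /= ?mulr1 ?mulr0.
Qed.

Lemma level_ind (P : vec -> Prop) :
  (forall i b, i != 0 -> P (sgn R b *: unitv R i)) ->
  (forall n x y1 y2 y3, unitV x -> level n.+1 x ->
     (forall x', unitV x' -> level n x' -> P x') ->
     2 ^+ n.+1 * x 0 i1 = zval y1 -> 2 ^+ n.+1 * x 0 i2 = zval y2 ->
     2 ^+ n.+1 * x 0 i3 = zval y3 -> zadmissible y1 y2 y3 -> P x) ->
  forall n x, unitV x -> level n x -> P x.
Proof.
move=> P0 PS; elim=> [|n IH] x ux lx.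
  by have [i [b [i_neq0 ->]]] := unit_level0 ux lx; apply: P0.
have [y1 [y2 [y3 [e1 e2 e3]]]] := level_coords lx.
have [/and3P[ev1 ev2 ev3] | nev] := boolP [&& zeven y1, zeven y2 & zeven y3].
  apply: IH ux _; exact: level_of_coords (zval_half e1 ev1) (zval_half e2 ev2) (zval_half e3 ev3).
exact: PS ux lx IH e1 e2 e3 (level_admissible ux e1 e2 e3 nev).
Qed.

Lemma zpattern_pat d k : (k < 3)%N ->
  (zval (zpattern d k 1), zval (zpattern d k 2), zval (zpattern d k 3))
    \in (if d then pat (tau' R) (tau R) else pat (tau R) (tau' R)).
Proof.
case: d; case: k => [|[|[|//]]] _; rewrite /zpattern /zroot /=.
all: by rewrite zval1 zval_tau zval_tau' !inE eqxx ?orbT.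
Qed.

Lemma level_S n x : unitV x -> level n x -> exists m, S3 m x \/ S3' m x.
Proof.
move: n x; apply: level_ind => [i b i_neq0 | n x y1 y2 y3 [x_V x_unit] lx _ e1 e2 e3].
  by exists 0%N; left; exists i, b.
case/zadmissible_patterned/hasP => d _ /hasP[k]; rewrite mem_iota => /andP[_ lt_k3].
case/and3P => /(zeven_eq_mod2 R) m1 /(zeven_eq_mod2 R) m2 /(zeven_eq_mod2 R) m3.
have Sx : Sn_gen (if d then pat (tau' R) (tau R) else pat (tau R) (tau' R)) n.+1 x.
  do 3!split => //; first by move=> j; apply: level_inZtau.
  exists (zval (zpattern d k 1)), (zval (zpattern d k 2)), (zval (zpattern d k 3)).
  by rewrite -/i1 -/i2 -/i3 e1 e2 e3; split; first exact: zpattern_pat.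
by exists n.+1; case: d Sx {m1 m2 m3}; [right | left].
Qed.

Lemma zval_zdot3 n x a y1 y2 y3 b1 b2 b3 : inV x ->
  2 ^+ n * x 0 i1 = zval y1 -> 2 ^+ n * x 0 i2 = zval y2 -> 2 ^+ n * x 0 i3 = zval y3 ->
  2 * a 0 i1 = zval b1 -> 2 * a 0 i2 = zval b2 -> 2 * a 0 i3 = zval b3 ->
  zval (zdot3 y1 y2 y3 b1 b2 b3) = 2 ^+ n.+1 * dot x a.
Proof.
rewrite /inV => x_V e1 e2 e3 f1 f2 f3.
by rewrite /zdot3 !zvalD !zvalM -e1 -e2 -e3 -f1 -f2 -f3 dotE x_V exprS; ring.
Qed.

Lemma zval_refl n x a y b u j : 2 ^+ n.+1 * x 0 j = zval y -> 2 * a 0 j = zval b ->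
  zval u = 2 ^+ n.+1 * dot x a ->
  2 ^+ n.+1 * refl a x 0 j = zval (zsub y (zmul u b)).
Proof. by move=> ex ea eu; rewrite zvalB zvalM eu -ex -ea reflE; ring. Qed.

Lemma level_Sigma3 n x : unitV x -> level n x -> Sigma3 x.
Proof.
move: n x; apply: level_ind => [i b i_neq0 | n x y1 y2 y3 [x_V x_unit] _ IH e1 e2 e3].
  exists id, (sgn R b *: unitv R i); split; first exact: gen_id.
  by split => //; left; split; [left; exists i, b | rewrite /inV !mxE eq_sym (negbTE i_neq0) mulr0].
case/zadmissible_reflectable => d [k [s1 [s2 [s3 [lt_k3 /= [ev_w reduce]]]]]].
set a := rootv R d k s1 s2 s3; have a_D : Delta3U a by apply: rootv_Delta3U.
have [/DeltaU_unit_inRR[a_unit _] a_V] := Delta3U_DeltaU a_D.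
have f j : 2 * a 0 j = zval (zroot d k s1 s2 s3 j) by apply: rootv_zroot.
move: (f i1) (f i2) (f i3); rewrite !val_iE => f1 f2 f3.
set w := zdot3 _ _ _ _ _ _ in ev_w reduce.
have hw : zval (zhalf w) = 2 ^+ n.+1 * dot x a.
  apply: (@mulfI _ 2); first by rewrite pnatr_eq0.
  by rewrite -zval_double zhalfK // (zval_zdot3 x_V e1 e2 e3 f1 f2 f3) exprS mulrA.
have /and3P[r1 r2 r3] := reduce (zhalf w) (zhalfK ev_w).
have lr : level n (refl a x).
  exact: level_of_coords (zval_half (zval_refl e1 f1 hw) r1)
    (zval_half (zval_refl e2 f2 hw) r2) (zval_half (zval_refl e3 f3 hw) r3).
have ur : unitV (refl a x) by split; [apply: refl_inV | rewrite dot_refl].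
have [g [y [gen_g [y_D def_y]]]] := IH _ ur lr.
exists (refl a \o g), y; split; first exact: gen_step.
by split => //=; rewrite -def_y reflK.
Qed.

End Levels.

Section Characterisations.
Variable R : rcfType.
Implicit Types x : 'rV[R]_4.

Lemma zval_lift k K (X : R) p : 2 ^+ k * X = zval R p -> (k <= K)%N ->
  2 ^+ K * X = zval R (zscale (2 ^+ (K - k)) p).
Proof. by move=> e le_kK; rewrite zvalZ -e rmorphXn mulrA -exprD subnK. Qed.

Lemma inRR_level x : (forall i, inRR (x 0 i)) -> exists n, level n x.
Proof.
move=> x_RR; have [k1 [p1 e1]] := inRR_dyadic (x_RR i1).
have [k2 [p2 e2]] := inRR_dyadic (x_RR i2); have [k3 [p3 e3]] := inRR_dyadic (x_RR i3).
exists (k1 + k2 + k3)%N.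
by apply: level_of_coords (zval_lift e1 _) (zval_lift e2 _) (zval_lift e3 _); lia.
Qed.

Lemma Sn_gen_unit_level P n x : Sn_gen P n x -> unitV x /\ level n x.
Proof.
case: n => [[i [b [i_neq0 ->]]] | n [x_V [x_unit [x_Z _]]]]; last first.
  by split => // j /x_Z/inZtau_zval.
have ex_D : Delta (sgn R b *: unitv R i) by left; exists i, b.
split; first split.
- by rewrite /inV !mxE eq_sym (negbTE i_neq0) mulr0.
- exact: (DeltaU_unit_inRR (or_introl ex_D)).1.
move=> j _; exists (if j == i then zsign b z1 else z0).
by rewrite !mxE expr0 mul1r; case: eqP => _; rewrite ?zval_sign ?zval1 ?zval0 ?mulr1 ?mulr0.
Qed.

Lemma S_Sigma3 x : (exists n, S3 n x \/ S3' n x) -> Sigma3 x.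
Proof. by case=> n [] /Sn_gen_unit_level[ux lx]; apply: level_Sigma3 ux lx. Qed.

Lemma sphereV_R_S x : sphereV_R x -> exists n, S3 n x \/ S3' n x.
Proof. by case=> x_V [x_unit /inRR_level[n lx]]; apply: (@level_S _ n). Qed.

Lemma SigmaV_sphereV_R x : Sigma x /\ inV x -> sphereV_R x.
Proof. by case=> /Sigma_unit_inRR[x_unit x_RR] x_V. Qed.

End Characterisations.

Theorem mainTheorem8 (R : rcfType) (x : 'rV[R]_4) :
  (Sigma3 x <-> exists n : nat, S3 n x \/ S3' n x) /\
  ((exists n : nat, S3 n x \/ S3' n x) <-> sphereV_R x) /\
  (sphereV_R x <-> Sigma x /\ inV x).
Proof.
have Sigma3_sphere : Sigma3 x -> sphereV_R x by move/Sigma3_Sigma_inV/SigmaV_sphereV_R.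
split; [split | split; split].
- by move/Sigma3_sphere/sphereV_R_S.
- exact: S_Sigma3.
- by move/S_Sigma3/Sigma3_sphere.
- exact: sphereV_R_S.
- by move/sphereV_R_S/S_Sigma3/Sigma3_Sigma_inV.
- exact: SigmaV_sphereV_R.
Qed.
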